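(* Let $v_1,v_2,v_3$ be a basis of $\mathbb{Z}^3$ such that $\|v_i\|^2$ is odd for all $i$. Then at most one of the numbers $\|v_1\|^2,\|v_2\|^2,\|v_3\|^2$ is congruent to $3\bmod 4$.
   Context: $\|\cdot\|$ is the Euclidean norm on $\mathbb{R}^3$. *)

From mathcomp Require Import all_boot all_algebra.
Set Implicit Arguments. Unset Strict Implicit. Unset Printing Implicit Defensive.
Import GRing.Theory Num.Theory.
Local Open Scope ring_scope.

Definition sqnorm (v : 'rV[int]_3) : int := \sum_(j < 3) v ord0 j ^+ 2.

Definition is_Z3_basis (v : 'I_3 -> 'rV[int]_3) : Prop :=
  forall w : 'rV[int]_3,
    exists! c : 'I_3 -> int, w = \sum_(i < 3) c i *: v i.

From mathcomp Require Import all_boot all_algebra.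
From mathcomp Require Import zify ring.
Set Implicit Arguments. Unset Strict Implicit. Unset Printing Implicit Defensive.
Import GRing.Theory Num.Theory.
Local Open Scope ring_scope.

(* An integer square is congruent to 0 or 1 mod 4, so a vector whose squared
   norm is 3 mod 4 has all its coordinates odd.  Two such basis vectors v i
   and v j would then differ by an element 2 u of 2 Z^3; expanding u in the
   basis yields a coordinate vector of v i - v j with only even entries,
   contradicting uniqueness of the coordinates (1 at i, -1 at j). *)

Lemma sqrz_mod4 (a : int) : (a ^+ 2 = (a %% 2)%Z %[mod 4])%Z.
Proof.
have a_eq := divz_eq a 2.
set q := (a %/ 2)%Z in a_eq *; set r := (a %% 2)%Z in a_eq *.
have -> : a ^+ 2 = q * (q + r) * 4 + r ^+ 2 by rewrite a_eq; ring.
have : r = 0 \/ r = 1 by rewrite /r; lia.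
by case=> ->; rewrite modzMDl.
Qed.

Lemma sum3_sqr_mod4_3 (a b c : int) :
  (a ^+ 2 + b ^+ 2 + c ^+ 2 = 3 %[mod 4])%Z ->
  [/\ a %% 2 = 1, b %% 2 = 1 & c %% 2 = 1]%Z.
Proof.
have := sqrz_mod4 a; have := sqrz_mod4 b; have := sqrz_mod4 c.
move: (a ^+ 2) (b ^+ 2) (c ^+ 2) => A B C.
by move=> *; split; lia.
Qed.

Lemma sqnorm_mod4_3_odd (w : 'rV[int]_3) :
  (sqnorm w = 3 %[mod 4])%Z -> forall k, (w ord0 k %% 2 = 1)%Z.
Proof.
rewrite /sqnorm !big_ord_recl big_ord0 addr0 addrA.
move=> /sum3_sqr_mod4_3[odd0 odd1 odd2] k.
have [-> | -> | ->] // :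
    [\/ k = ord0, k = lift ord0 ord0 | k = lift ord0 (lift ord0 ord0)].
by case: k => -[|[|[|//]]] lt_k; [apply: Or31 | apply: Or32 | apply: Or33];
  apply: val_inj.
Qed.

Lemma subr_odd_rows_even n (w1 w2 : 'rV[int]_n) :
  (forall k, w1 ord0 k %% 2 = 1)%Z -> (forall k, w2 ord0 k %% 2 = 1)%Z ->
  exists u : 'rV[int]_n, w1 - w2 = 2 *: u.
Proof.
move=> odd_w1 odd_w2; exists (\row_k ((w1 ord0 k - w2 ord0 k) %/ 2)%Z).
apply/rowP => k; rewrite !mxE.
(* After mxE the entries occur as both [w ord0 k] and [w 0 k], under different
   canonical instances; abstracting them gives lia a single atom for each. *)
have := odd_w1 k; have := odd_w2 k; have := divz_eq (w1 ord0 k - w2 ord0 k) 2.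
move: (w1 ord0 k) (w2 ord0 k) => a b; lia.
Qed.

Lemma sum_scale_delta (R : pzRingType) (V : lmodType R) (I : finType)
    (F : I -> V) (i : I) :
  \sum_k (k == i)%:R *: F k = F i.
Proof.
under eq_bigr do rewrite scaler_nat mulrb.
by rewrite -big_mkcond big_pred1_eq.
Qed.

Lemma Z3_basis_subr_not_even (v : 'I_3 -> 'rV[int]_3) (i j : 'I_3)
    (u : 'rV[int]_3) :
  is_Z3_basis v -> i != j -> v i - v j <> 2 *: u.
Proof.
move=> v_basis neq_ij vij_eq.
have [c [u_eq _]] := v_basis u.
have [d [_ coord_uniq]] := v_basis (v i - v j).
have coord_even : v i - v j = \sum_k (2 * c k) *: v k.
  by rewrite vij_eq u_eq scaler_sumr; apply: eq_bigr => k _; rewrite scalerA.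
have coord_delta : v i - v j = \sum_k ((k == i)%:R - (k == j)%:R) *: v k.
  under eq_bigr do rewrite scalerBl.
  by rewrite sumrB !sum_scale_delta.
have := congr1 (fun f => f i) (coord_uniq _ coord_even).
rewrite (coord_uniq _ coord_delta) /= eqxx (negbTE neq_ij).
lia.
Qed.

Theorem proposition4 (v : 'I_3 -> 'rV[int]_3) :
  is_Z3_basis v ->
  (forall i : 'I_3, ~~ (2 %| sqnorm (v i))%Z) ->
  (#|[pred i : 'I_3 | (sqnorm (v i) == 3 %[mod 4])%Z]| <= 1)%N.
Proof.
move=> v_basis _; rewrite leqNgt; apply/card_gt1P => -[i [j [mod4_i mod4_j neq_ij]]].
have [u vij_eq] := subr_odd_rows_even (sqnorm_mod4_3_odd (eqP mod4_i))
  (sqnorm_mod4_3_odd (eqP mod4_j)).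
exact: Z3_basis_subr_not_even v_basis neq_ij vij_eq.
Qed.
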